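(* There exist an objective $f:\mathbb{R}^d\to\mathbb{R}$ satisfying Assumptions 1 and 2, a stochastic gradient oracle $(F,\mathcal D)$ satisfying Assumption 3, an initial point $x^{(0)}$ and a constant $\epsilon_0>0$ such that for GaSare with an arbitrary subspace optimizer, any sparsity levels $k_\ell<m_\ell n_\ell$, any period $\tau\ge1$, any choice of the maps $\rho_\ell^{(t)}$ (with arbitrary hyperparameters), and every realization of the samples, $\|\nabla f(x^{(t)})\|_2^2\ge\epsilon_0$ for all $t\ge0$.
   Context: Parameters $x=(\mathrm{vec}(X_1)^\top,\dots,\mathrm{vec}(X_{N_L})^\top)^\top\in\mathbb{R}^d$, $X_\ell\in\mathbb{R}^{m_\ell\times n_\ell}$; $f(x)=\mathbb{E}_{\xi\sim\mathcal D}F(x;\xi)$; $\nabla_\ell$ is the gradient w.r.t. $X_\ell$. Assumption 1: $\inf f>-\infty$. Assumption 2: $\nabla f$ is $L$-Lipschitz in $\|\cdot\|_2$. Assumption 3: $\mathbb{E}_\xi[\nabla_\ell F(x;\xi)]=\nabla_\ell f(x)$ and $\mathbb{E}_\xi\|\nabla_\ell F(x;\xi)-\nabla_\ell f(x)\|_F^2\le\sigma_\ell^2$ for all $x,\ell$. GaSare with an arbitrary subspace optimizer: at each $t$ draw $\xi^{(t)}\sim\mathcal D$ independently and set $G_\ell^{(t)}=\nabla_\ell F(x^{(t)};\xi^{(t)})$; if $t\equiv0\pmod\tau$ let $S_\ell^{(t)}$ be a Top-$k_\ell$ mask of $G_\ell^{(t)}$ (the $0/1$ matrix with exactly $k_\ell$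 ones at positions of $k_\ell$ entries of largest absolute value, ties arbitrary), otherwise $S_\ell^{(t)}=S_\ell^{(t-1)}$; update $X_\ell^{(t+1)}=X_\ell^{(t)}+S_\ell^{(t)}\odot\rho_\ell^{(t)}(S_\ell^{(t)}\odot G_\ell^{(t)})$, where $\rho_\ell^{(t)}$ is an arbitrary (possibly stateful) map from $m_\ell\times n_\ell$ matrices to $m_\ell\times n_\ell$ matrices and $\odot$ is the entrywise product. *)

From mathcomp Require Import all_boot all_order all_algebra.
From mathcomp Require Import reals.
Set Implicit Arguments. Unset Strict Implicit. Unset Printing Implicit Defensive.
Import Order.TTheory GRing.Theory Num.Theory.
Local Open Scope ring_scope.

Section GaSare.
Variable R : realType.
Variable NL : nat.
Variables m n : 'I_NL -> nat.

(* parameter x = (X_1, ..., X_{N_L}), X_l in R^{m_l x n_l}; R^d with d = sum m_l n_l *)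
Definition params := forall l : 'I_NL, 'M[R]_(m l, n l).

Definition padd (x y : params) : params := fun l => x l + y l.
Definition psub (x y : params) : params := fun l => x l - y l.

Definition pinner (x y : params) : R :=
  \sum_(l < NL) \sum_(i < m l) \sum_(j < n l) x l i j * y l i j.
Definition norm2 (x : params) : R := Num.sqrt (pinner x x).

Definition frob_sq p q (A : 'M[R]_(p, q)) : R := \sum_(i < p) \sum_(j < q) A i j ^+ 2.

Definition is_gradient (f : params -> R) (g : params -> params) : Prop :=
  forall x : params, forall e : R, 0 < e -> exists d : R, 0 < d /\
    forall h : params, norm2 h < d ->
      `|f (padd x h) - f x - pinner (g x) h| <= e * norm2 h.

Definition bounded_below (f : params -> R) : Prop := exists c : R, forall x, c <= f x.

Definition lipschitz_grad (g : params -> params) : Prop :=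
  exists L : R, 0 <= L /\ forall x y, norm2 (psub (g x) (g y)) <= L * norm2 (psub x y).

Definition is_distribution (Xi : finType) (p : Xi -> R) : Prop :=
  (forall xi, 0 <= p xi) /\ \sum_(xi : Xi) p xi = 1.

Definition oracle_ok (Xi : finType) (p : Xi -> R) (f : params -> R) (g : params -> params)
    (F : params -> Xi -> R) (GF : params -> Xi -> params) : Prop :=
  is_distribution p /\
  (forall x, \sum_(xi : Xi) p xi * F x xi = f x) /\
  (forall xi, is_gradient (fun x => F x xi) (fun x => GF x xi)) /\
  (forall x (l : 'I_NL), \sum_(xi : Xi) p xi *: GF x xi l = g x l) /\
  (exists sigma : 'I_NL -> R, forall x (l : 'I_NL),
     \sum_(xi : Xi) p xi * frob_sq (GF x xi l - g x l) <= sigma l ^+ 2).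

Definition hadamard p q (A B : 'M[R]_(p, q)) : 'M[R]_(p, q) := map2_mx *%R A B.

Definition topk_mask p q (k : nat) (G S : 'M[R]_(p, q)) : Prop :=
  (forall i j, S i j = 0 \/ S i j = 1) /\
  #|[set ij : 'I_p * 'I_q | S ij.1 ij.2 == 1]| = k /\
  (forall i j i' j', S i j = 1 -> S i' j' = 0 -> `|G i' j'| <= `|G i j|).

Definition gasare_traj (Xi : finType) (GF : params -> Xi -> params) (x0 : params)
    (k : 'I_NL -> nat) (tau : nat)
    (rho : nat -> forall l : 'I_NL, 'M[R]_(m l, n l) -> 'M[R]_(m l, n l))
    (xi : nat -> Xi) (x : nat -> params) (S : nat -> params) : Prop :=
  x 0%N = x0 /\
  forall t : nat, forall l : 'I_NL,
    let G := GF (x t) (xi t) l in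
    ((tau %| t)%N -> topk_mask (k l) G (S t l)) /\
    (~~ (tau %| t)%N -> S t l = S t.-1 l) /\
    x t.+1 l = x t l + hadamard (S t l) (rho t l (hadamard (S t l) G)).

End GaSare.

(* The objective is f(x) = c(x)^2 for one fixed coordinate c, and the oracle adds
   the noise +-3 (with probability 1/2 each) to every other coordinate of the
   gradient.  At c(x) = 1 every stochastic gradient has magnitude 2 at c and 3
   everywhere else, so a Top-k mask with k < m n never selects c.  Hence c is
   never updated, stays equal to 1 from x(0) = e_c on, and |grad f| = 2. *)
From mathcomp Require Import all_boot all_order all_algebra.
From mathcomp Require Import reals.
From mathcomp Require Import ring lra zify.
Set Implicit Arguments. Unset Strict Implicit. Unset Printing Implicit Defensive.
Import Order.TTheory GRing.Theory Num.Theory.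
Local Open Scope ring_scope.

Lemma topk_mask_strict_min (R : realType) p q (k : nat) (G S : 'M[R]_(p, q))
    (i0 : 'I_p) (j0 : 'I_q) :
  (k < p * q)%N ->
  (forall i j, (i, j) != (i0, j0) -> `|G i0 j0| < `|G i j|) ->
  topk_mask k G S -> S i0 j0 = 0.
Proof.
move=> hk hmin [S01 [cardS hdom]].
case: (S01 i0 j0) => // S1.
set A := [set ij : 'I_p * 'I_q | S ij.1 ij.2 == 1].
have : (0 < #|~: A|)%N.
  by move: (cardsC A); rewrite cardS card_prod !card_ord; lia.
rewrite card_gt0 => /set0Pn [[i j]]; rewrite !inE /= => Sij.
have S0 : S i j = 0 by case: (S01 i j) => // h; rewrite h eqxx in Sij.
have hij : (i, j) != (i0, j0).
  by apply: contraNneq Sij => -[-> ->]; rewrite S1.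
by have := hdom _ _ _ _ S1 S0; rewrite leNgt hmin.
Qed.

Section Inner.
Variable R : realType.
Variable NL : nat.
Variables m n : 'I_NL -> nat.

Lemma pinner_ext (u u' v v' : params R m n) :
  (forall l, u l = u' l) -> (forall l, v l = v' l) -> pinner u v = pinner u' v'.
Proof. by move=> hu hv; apply: eq_bigr => l _; rewrite hu hv. Qed.

Lemma pinnerDl (u v y : params R m n) :
  pinner (fun l => u l + v l) y = pinner u y + pinner v y.
Proof.
rewrite /pinner -big_split; apply: eq_bigr => l _.
rewrite -big_split; apply: eq_bigr => i _.
by rewrite -big_split; apply: eq_bigr => j _; rewrite mxE mulrDl.
Qed.

Lemma pinnerDr (u x h : params R m n) :
  pinner u (padd x h) = pinner u x + pinner u h.
Proof.
rewrite /pinner -big_split; apply: eq_bigr => l _.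
rewrite -big_split; apply: eq_bigr => i _.
by rewrite -big_split; apply: eq_bigr => j _; rewrite mxE mulrDr.
Qed.

Lemma pinnerZl s (u y : params R m n) :
  pinner (fun l => s *: u l) y = s * pinner u y.
Proof.
rewrite /pinner mulr_sumr; apply: eq_bigr => l _.
rewrite mulr_sumr; apply: eq_bigr => i _.
by rewrite mulr_sumr; apply: eq_bigr => j _; rewrite mxE mulrA.
Qed.

Lemma pinnerNl (u y : params R m n) :
  pinner (fun l => - u l) y = - pinner u y.
Proof.
rewrite -mulN1r -pinnerZl; apply: pinner_ext => // l.
by rewrite scaleN1r.
Qed.

Lemma frob_sqN p q (A : 'M[R]_(p, q)) : frob_sq (- A) = frob_sq A.
Proof. by apply: eq_bigr => i _; apply: eq_bigr => j _; rewrite mxE sqrrN. Qed.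

Lemma frob_sq_ge0 p q (A : 'M[R]_(p, q)) : 0 <= frob_sq A.
Proof. by apply: sumr_ge0 => i _; apply: sumr_ge0 => j _; apply: sqr_ge0. Qed.

End Inner.

Section Coordinate.
Variable R : realType.
Variable NL : nat.
Variables m n : 'I_NL -> nat.
Variables (l0 : 'I_NL) (i0 : 'I_(m l0)) (j0 : 'I_(n l0)).

Definition coord (y : params R m n) : R := y l0 i0 j0.

(* The index types depend on [l], so position is compared through [val]. *)
Definition at_coord (l : 'I_NL) (i : 'I_(m l)) (j : 'I_(n l)) : bool :=
  [&& l == l0, val i == val i0 & val j == val j0].

Definition basis : params R m n := fun l => \matrix_(i, j) (at_coord i j)%:R.

Lemma at_coordP (i : 'I_(m l0)) (j : 'I_(n l0)) : at_coord i j = ((i, j) == (i0, j0)).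
Proof. by rewrite /at_coord eqxx. Qed.

Lemma coord_basis : coord basis = 1.
Proof. by rewrite /coord mxE at_coordP eqxx. Qed.

Lemma coordD x h : coord (padd x h) = coord x + coord h.
Proof. by rewrite /coord mxE. Qed.

Lemma coordB x h : coord (psub x h) = coord x - coord h.
Proof. by rewrite /coord !mxE. Qed.

Lemma coordZ_basis s : coord (fun l => s *: basis l) = s.
Proof. by rewrite /coord mxE -/(coord basis) coord_basis mulr1. Qed.

Lemma pinner_basisl y : pinner basis y = coord y.
Proof.
rewrite /pinner (bigD1 l0) //= [X in _ + X]big1 ?addr0 => [|l /negbTE l_ne].
  rewrite (bigD1 i0) //= [X in _ + X]big1 ?addr0 => [|i i_ne].
    rewrite (bigD1 j0) //= [X in _ + X]big1 ?addr0 => [|j j_ne].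
      by rewrite mxE at_coordP eqxx mul1r.
    by rewrite mxE at_coordP xpair_eqE eqxx (negbTE j_ne) mul0r.
  by apply: big1 => j _; rewrite mxE at_coordP xpair_eqE (negbTE i_ne) mul0r.
by apply: big1 => i _; apply: big1 => j _; rewrite mxE /at_coord l_ne mul0r.
Qed.

Lemma coord_sq_le_pinner y : coord y ^+ 2 <= pinner y y.
Proof.
have sq_ge0 (a : R) : 0 <= a * a by rewrite -expr2 sqr_ge0.
rewrite /pinner (bigD1 l0) //= -[leLHS]addr0 lerD //; last first.
  by do 3 (apply: sumr_ge0 => ? _).
rewrite (bigD1 i0) //= -[leLHS]addr0 lerD //; last first.
  by do 2 (apply: sumr_ge0 => ? _).
rewrite (bigD1 j0) //= -[leLHS]addr0 lerD //.
by apply: sumr_ge0 => ? _.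
Qed.

Lemma coord_le_norm2 y : `|coord y| <= norm2 y.
Proof. by rewrite -sqrtr_sqr; apply/ler_wsqrtr/coord_sq_le_pinner. Qed.

Lemma coord_sq_le_mul_norm2 (h : params R m n) e :
  norm2 h < e -> coord h ^+ 2 <= e * norm2 h.
Proof.
move=> lt_he; have := coord_le_norm2 h; have := normr_ge0 (coord h).
have := sqrtr_ge0 (pinner h h).
rewrite -/(norm2 h) -real_normK ?num_real // expr2; nra.
Qed.

Definition coord_sq (x : params R m n) : R := coord x ^+ 2.
Definition coord_sq_grad (x : params R m n) : params R m n :=
  fun l => (2 * coord x) *: basis l.

Lemma pinner_coord_sq_grad x h : pinner (coord_sq_grad x) h = 2 * coord x * coord h.
Proof. by rewrite pinnerZl pinner_basisl. Qed.

Lemma coord_sq_remainder x h :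
  coord_sq (padd x h) - coord_sq x - pinner (coord_sq_grad x) h = coord h ^+ 2.
Proof. by rewrite pinner_coord_sq_grad /coord_sq coordD; ring. Qed.

(* [coord h ^+ 2 <= e * norm2 h] as soon as [norm2 h < e], so [d := e] works. *)
Lemma is_gradient_quadratic_remainder (f : params R m n -> R) g :
  (forall x h, f (padd x h) - f x - pinner (g x) h = coord h ^+ 2) ->
  is_gradient f g.
Proof.
move=> rem x e e_gt0; exists e; split=> // h lt_he.
by rewrite rem ger0_norm ?sqr_ge0 //; apply: coord_sq_le_mul_norm2.
Qed.

Lemma is_gradient_coord_sq : is_gradient coord_sq coord_sq_grad.
Proof. exact/is_gradient_quadratic_remainder/coord_sq_remainder. Qed.

Lemma lipschitz_coord_sq_grad : lipschitz_grad coord_sq_grad.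
Proof.
exists 2; split=> // x y.
set s := 2 * (coord x - coord y).
have diff_eq l : psub (coord_sq_grad x) (coord_sq_grad y) l = s *: basis l.
  by rewrite /psub /coord_sq_grad /s -scalerBl mulrBr.
rewrite /norm2 (pinner_ext diff_eq diff_eq) pinnerZl pinner_basisl coordZ_basis -expr2 sqrtr_sqr.
by rewrite /s normrM ger0_norm // -coordB ler_wpM2l // coord_le_norm2.
Qed.

Definition noise : params R m n := fun l => \matrix_(i, j) (3 * (1 - (at_coord i j)%:R)).

Definition noisy_loss (x : params R m n) (b : bool) : R :=
  coord_sq x + (if b then pinner noise x else - pinner noise x).
Definition noisy_grad (x : params R m n) (b : bool) : params R m n :=
  fun l => coord_sq_grad x l + (if b then noise l else - noise l).

Lemma is_gradient_noisy_loss b :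
  is_gradient (fun x => noisy_loss x b) (fun x => noisy_grad x b).
Proof.
apply: is_gradient_quadratic_remainder => x h.
rewrite /noisy_loss /noisy_grad pinnerDl -(coord_sq_remainder x h).
by case: b; rewrite ?pinnerNl pinnerDr; ring.
Qed.

Lemma oracle_ok_noisy :
  oracle_ok (fun _ : bool => 2^-1) coord_sq coord_sq_grad noisy_loss noisy_grad.
Proof.
have halves : 2^-1 + 2^-1 = 1 :> R by lra.
split; first by split=> [_|]; rewrite ?big_bool ?invr_ge0.
split; first by move=> x; rewrite big_bool /noisy_loss /=; lra.
split; first exact: is_gradient_noisy_loss.
split.
  move=> x l; rewrite big_bool /noisy_grad /= !scalerDr addrACA scalerN subrr.
  by rewrite addr0 -scalerDl halves scale1r.
exists (fun l => Num.sqrt (frob_sq (noise l))) => x l.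
rewrite big_bool /noisy_grad /= !(addrC (coord_sq_grad x l)) !addrK frob_sqN.
by rewrite -mulrDl halves mul1r sqr_sqrtr ?frob_sq_ge0.
Qed.

Lemma noisy_grad_strict_min x b : coord x = 1 ->
  forall i j, (i, j) != (i0, j0) ->
    `|noisy_grad x b l0 i0 j0| < `|noisy_grad x b l0 i j|.
Proof.
move=> cx i j /negbTE ij_ne.
rewrite /noisy_grad /coord_sq_grad cx; case: b;
  rewrite !mxE !at_coordP ij_ne eqxx /=;
  by rewrite !(mulr1, mulr0, subrr, subr0, addr0, add0r, sub0r, normrN) !ger0_norm //; lra.
Qed.

Lemma norm2_coord_sq_grad x : coord x = 1 -> norm2 (coord_sq_grad x) ^+ 2 = 4.
Proof.
move=> cx; have sq : pinner (coord_sq_grad x) (coord_sq_grad x) = 4.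
  by rewrite pinner_coord_sq_grad coordZ_basis cx; ring.
by rewrite /norm2 sq sqr_sqrtr //; lra.
Qed.

Lemma gasare_coord_frozen (k : 'I_NL -> nat) tau rho xi (x S : nat -> params R m n) :
  (k l0 < m l0 * n l0)%N ->
  gasare_traj noisy_grad basis k tau rho xi x S ->
  forall t, coord (x t) = 1 /\ S t l0 i0 j0 = 0.
Proof.
move=> hk [x_0 step].
have masked t : coord (x t) = 1 -> (~~ (tau %| t)%N -> S t.-1 l0 i0 j0 = 0) ->
    S t l0 i0 j0 = 0.
  move=> cx prev; have [topk [keep _]] := step t l0.
  have [dvd_t | ndvd_t] := boolP (tau %| t)%N; last by rewrite keep ?prev.
  exact: topk_mask_strict_min hk (noisy_grad_strict_min _ cx) (topk dvd_t).
elim=> [|t [cx St]].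
  have cx0 : coord (x 0%N) = 1 by rewrite x_0 coord_basis.
  by split=> //; apply: masked; rewrite ?dvdn0.
have cx' : coord (x t.+1) = 1.
  have [_ [_ update]] := step t l0.
  by rewrite /coord update !mxE -/(coord (x t)) cx St mul0r addr0.
by split=> //; apply: masked.
Qed.

End Coordinate.

Theorem theoremC3 (R : realType) (NL : nat) (m n : 'I_NL -> nat)
    (hNL : (0 < NL)%N) (hm : forall l, (0 < m l)%N) (hn : forall l, (0 < n l)%N) :
  exists (f : params R m n -> R) (g : params R m n -> params R m n),
  exists (Xi : finType) (p : Xi -> R) (F : params R m n -> Xi -> R)
         (GF : params R m n -> Xi -> params R m n),
  exists (x0 : params R m n) (eps0 : R),
    is_gradient f g /\ bounded_below f /\ lipschitz_grad g /\
    oracle_ok p f g F GF /\ 0 < eps0 /\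
    forall (k : 'I_NL -> nat), (forall l, (k l < m l * n l)%N) ->
    forall (tau : nat), (1 <= tau)%N ->
    forall (rho : nat -> forall l : 'I_NL, 'M[R]_(m l, n l) -> 'M[R]_(m l, n l)),
    forall (xi : nat -> Xi) (x S : nat -> params R m n),
      gasare_traj GF x0 k tau rho xi x S ->
      forall t : nat, eps0 <= norm2 (g (x t)) ^+ 2.
Proof.
pose l0 := Ordinal hNL; pose i0 := Ordinal (hm l0); pose j0 := Ordinal (hn l0).
exists (coord_sq i0 j0), (coord_sq_grad i0 j0), bool, (fun _ => 2^-1),
  (noisy_loss i0 j0), (noisy_grad i0 j0), (basis R i0 j0), 1.
split; first exact: is_gradient_coord_sq.
split; first by exists 0 => x; apply: sqr_ge0.
split; first exact: lipschitz_coord_sq_grad.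
split; first exact: oracle_ok_noisy.
split=> // k hk tau _ rho xi x S run t.
have [cx _] := gasare_coord_frozen (hk l0) run t.
by rewrite norm2_coord_sq_grad //; lra.
Qed.
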